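(* Let $D\ge2$ and $k\ge2$. There exist constants $c,C_k>0$ depending only on $D$ and $k$ such that: let $0<\varepsilon<c$ and $E\subset\mathbb R^D$ with $2\leq\mathrm{card}(E)\leq k$. Then there exist $\tau$ with $\exp(-C_k/\varepsilon)\mathrm{diam}(E)\leq\tau\leq\exp(-1/\varepsilon)\mathrm{diam}(E)$ and a partition of $E$ into subsets $E_\nu$ ($\nu=1,\dots,\nu_{\max}$) such that $\mathrm{card}(E_\nu)\leq k-1$ for all $\nu$, $\mathrm{diam}(E_\nu)\leq\exp(-5/\varepsilon)\tau$ for all $\nu$, and $\mathrm{dist}(E_\nu,E_{\nu'})\geq\tau$ for all $\nu\neq\nu'$. *)

From HB Require Import structures.
From mathcomp Require Import all_boot all_order all_algebra.
From mathcomp Require Import reals.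
From mathcomp Require Import sequences exp.
Set Implicit Arguments. Unset Strict Implicit. Unset Printing Implicit Defensive.
Import Order.TTheory GRing.Theory Num.Theory.
Local Open Scope ring_scope.

Definition edist (R : realType) (D : nat) (x y : 'rV[R]_D) : R :=
  Num.sqrt (\sum_(i < D) (x ord0 i - y ord0 i) ^+ 2).

(* diameter of a finite set given as a list: max of pairwise distances
   (0 for the empty or singleton set). *)
Definition diam (R : realType) (D : nat) (s : seq 'rV[R]_D) : R :=
  \big[Num.max/0]_(x <- s) \big[Num.max/0]_(y <- s) edist x y.

Definition dist_ge (R : realType) (D : nat) (A B : seq 'rV[R]_D) (t : R) : Prop :=
  forall x y, x \in A -> y \in B -> t <= edist x y.

(* P is a partition of the finite set E (E duplicate-free) into nonempty blocks *)
Definition is_partition (T : eqType) (P : seq (seq T)) (E : seq T) : Prop :=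
  perm_eq (flatten P) E /\ (forall B, B \in P -> B != [::]).

(* Look at the scales [tau_j = exp (-(1 + 5 j) / eps) * diam E] for
   [j <= k ^ 2].  The at most [k ^ 2] distances between points of [E] cannot
   meet all the windows [[exp (-5 / eps) tau_j, tau_j)], so one window
   contains none of them.  At that scale, being closer than
   [a = exp (-5 / eps) tau_j] is an equivalence relation on [E]: two steps
   below [a] give a distance below [2 a <= tau_j], hence below [a].  Its
   classes have diameter at most [a], are [tau_j] apart from each other, and
   are proper subsets of [E] because [diam E > a]. *)

From HB Require Import structures.
From mathcomp Require Import all_boot all_order all_algebra.
From mathcomp Require Import reals.
From mathcomp Require Import sequences exp.
From mathcomp Require Import ring lra zify.
Import Order.TTheory GRing.Theory Num.Theory.
Local Open Scope ring_scope.

Section EuclideanDistance.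
Context {R : realType} {D : nat}.
Implicit Types (x y z : 'rV[R]_D) (s : seq 'rV[R]_D).

Lemma edist_ge0 x y : 0 <= edist x y.
Proof. exact: sqrtr_ge0. Qed.

Lemma edist_sqr x y : edist x y ^+ 2 = \sum_(i < D) (x ord0 i - y ord0 i) ^+ 2.
Proof. by rewrite /edist sqr_sqrtr // sumr_ge0 // => i _; exact: sqr_ge0. Qed.

Lemma edistC x y : edist x y = edist y x.
Proof. by rewrite /edist; congr Num.sqrt; apply: eq_bigr => i _; rewrite -sqrrN opprB. Qed.

Lemma edistxx x : edist x x = 0.
Proof. by rewrite /edist big1 ?sqrtr0 // => i _; rewrite subrr expr0n. Qed.

Lemma edist_gt0 {x y} : x != y -> 0 < edist x y.
Proof.
move=> neq_xy; rewrite sqrtr_gt0.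
have [i neq_i] : exists i, x ord0 i != y ord0 i.
  apply/existsP; apply: contraR neq_xy => /existsPn eq_xy.
  by apply/eqP/rowP => i; apply/eqP; rewrite -[_ == _]negbK eq_xy.
rewrite (bigD1 i) //= ltr_wpDr ?sumr_ge0 // => [j _|]; first exact: sqr_ge0.
by rewrite lt_def sqr_ge0 andbT sqrf_eq0 subr_eq0.
Qed.

(* A weak triangle inequality, from [|x - z|^2 <= 2 |x - y|^2 + 2 |y - z|^2]. *)
Lemma edist_lt_double {a : R} {x y z} :
  edist x y < a -> edist y z < a -> edist x z < 2 * a.
Proof.
move=> lt_xy lt_yz.
have := edist_ge0 x y; have := edist_ge0 y z; have := edist_ge0 x z.
have : edist x z ^+ 2 <= 2 * edist x y ^+ 2 + 2 * edist y z ^+ 2.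
  rewrite !edist_sqr !mulr_sumr -big_split /=; apply: ler_sum => i _.
  have := sqr_ge0 (x ord0 i + z ord0 i - 2 * y ord0 i); nra.
nra.
Qed.

Lemma diam_le s (a : R) :
  0 <= a -> {in s &, forall x y, edist x y <= a} -> diam s <= a.
Proof.
move=> a_ge0 le_a; rewrite /diam big_seq; apply: bigmax_le => // x xs.
by rewrite big_seq; apply: bigmax_le => // y ys; exact: le_a.
Qed.

Lemma edist_le_diam s x y : x \in s -> y \in s -> edist x y <= diam s.
Proof.
move=> xs ys; apply: le_trans (le_bigmax_seq 0 y xpredT (edist x) ys isT) _.
exact: le_bigmax_seq 0 x xpredT (fun x => \big[Num.max/0]_(y <- s) edist x y) xs isT.
Qed.

Lemma diam_gt0 {s} : uniq s -> (2 <= size s)%N -> 0 < diam s.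
Proof.
case: s => [|x [|y s]] //= /andP[x_notin _] _.
have neq_xy : x != y by apply: contraNneq x_notin => ->; rewrite mem_head.
apply: lt_le_trans (edist_gt0 neq_xy) _.
by apply: edist_le_diam; rewrite !inE eqxx ?orbT.
Qed.

End EuclideanDistance.

Lemma count_lt_subpred (T : Type) (p q : pred T) (s : seq T) :
  subpred p q -> has (fun v => q v && ~~ p v) s -> (count p s < count q s)%N.
Proof.
move=> le_pq; rewrite has_count.
have -> : count q s = (count p s + count (fun v => q v && ~~ p v) s)%N.
  elim: s => //= v s ->; case pv: (p v) => /=.
    by rewrite (le_pq _ pv) /=; lia.
  by rewrite andbT; lia.
by rewrite -{1}[count p s]addn0 ltn_add2l.
Qed.

(* Pigeonhole: [size s] points cannot meet all of the [size s + 1] disjoint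
   intervals [[t j.+1, t j)], [j <= size s]. *)
Lemma exists_empty_scale {R : realDomainType} {t : nat -> R} (s : seq R) :
  (forall j, t j.+1 <= t j) ->
  exists2 j, (j <= size s)%N & ~~ has (fun v => t j.+1 <= v < t j) s.
Proof.
move=> t_dec.
have [/allP hit|/allPn [j j_in gap]] :=
  boolP (all (fun j => has (fun v => t j.+1 <= v < t j) s) (iota 0 (size s).+1));
  last by exists j; move: j_in; rewrite mem_iota add0n ltnS.
suff: forall j, (j <= (size s).+1)%N -> (j <= count (fun v => (t j <= v)%R) s)%N.
  by move=> /(_ _ (leqnn _)) /leq_trans /(_ (count_size _ _)); rewrite ltnn.
elim=> // j IH lt_j.
apply: leq_ltn_trans (IH (ltnW lt_j)) _; apply: count_lt_subpred.
  by move=> v /(le_trans (t_dec j)).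
apply: sub_has (hit j _) => [v /andP[-> lt_v]|]; first by rewrite -ltNge.
by rewrite mem_iota.
Qed.

Lemma uniq_flatten_disjoint (T : eqType) (P : seq (seq T)) :
  uniq P -> {in P, forall B, uniq B} ->
  (forall B B' x, B \in P -> B' \in P -> x \in B -> x \in B' -> B = B') ->
  uniq (flatten P).
Proof.
elim: P => //= B P IH /andP[B_notin uniq_P] uniq_in disj.
rewrite cat_uniq uniq_in ?mem_head //= IH //; first last.
- by move=> B1 B2 x B1P B2P; apply: disj; rewrite inE ?B1P ?B2P orbT.
- by move=> B1 B1P; apply: uniq_in; rewrite inE B1P orbT.
rewrite andbT; apply/hasPn => x /flattenP [B' B'P xB']; apply/negP => xB.
by move: B_notin; rewrite (disj B B' x) ?mem_head ?inE ?B'P ?orbT.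
Qed.

Section EquivalenceClasses.
Context {T : eqType} (r : rel T) (E : seq T).
Hypotheses (uniq_E : uniq E) (r_refl : {in E, reflexive r})
  (r_sym : {in E &, symmetric r}) (r_trans : {in E & &, transitive r}).

Definition rclass u := [seq w <- E | r u w].

Definition rclasses := undup [seq rclass u | u <- E].

Lemma rclassesP B : B \in rclasses -> exists2 u, u \in E & B = rclass u.
Proof. by rewrite mem_undup => /mapP. Qed.

Lemma rclass_sub u : {subset rclass u <= E}.
Proof. by move=> w; rewrite mem_filter => /andP[]. Qed.

Lemma rclass_self {u} : u \in E -> u \in rclass u.
Proof. by move=> uE; rewrite mem_filter r_refl. Qed.

Lemma rclass_related u v w :
  u \in E -> v \in rclass u -> w \in rclass u -> r v w.
Proof.
move=> uE; rewrite !mem_filter => /andP[ruv vE] /andP[ruw wE].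
by apply: (r_trans _ _ _ uE vE wE) ruw; rewrite r_sym.
Qed.

Lemma rclass_eq u u' : u \in E -> u' \in E -> r u u' -> rclass u = rclass u'.
Proof.
move=> uE u'E ruu'; apply: eq_in_filter => w wE; apply/idP/idP => [ruw|ru'w].
  by apply: (r_trans _ _ _ uE u'E wE) ruw; rewrite r_sym.
exact: (r_trans _ _ _ u'E uE wE) ruu' ru'w.
Qed.

Lemma rclasses_eq {B B' v w} : B \in rclasses -> B' \in rclasses ->
  v \in B -> w \in B' -> r v w -> B = B'.
Proof.
move=> /rclassesP[u uE ->] /rclassesP[u' u'E ->].
rewrite !mem_filter => /andP[ruv vE] /andP[ru'w wE] rvw.
apply: rclass_eq => //; apply: (r_trans _ _ _ wE uE u'E); last by rewrite r_sym.
exact: (r_trans _ _ _ vE uE wE) ruv rvw.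
Qed.

Lemma rclasses_partition : is_partition rclasses E.
Proof.
split=> [|B /rclassesP[u uE ->]]; last first.
  by apply/eqP => B_nil; have := rclass_self uE; rewrite B_nil.
apply: uniq_perm => //.
  apply: uniq_flatten_disjoint; first exact: undup_uniq.
    by move=> B /rclassesP[u _ ->]; exact: filter_uniq.
  move=> B B' v BP B'P vB vB'; apply: (rclasses_eq BP B'P vB vB').
  by apply: r_refl; case/rclassesP: BP vB => u _ -> /rclass_sub.
move=> v; apply/flattenP/idP => [[B /rclassesP[u _ ->] /rclass_sub //]|vE].
by exists (rclass v); [rewrite mem_undup map_f | exact: rclass_self].
Qed.

Lemma size_rclasses_lt {x y B} : x \in E -> y \in E -> ~~ r x y ->
  B \in rclasses -> (size B < size E)%N.
Proof.
move=> xE yE not_rxy /rclassesP[u uE ->].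
have [z zE not_ruz] : exists2 z, z \in E & ~~ r u z.
  have [rux|] := boolP (r u x); last by exists x.
  exists y => //; apply: contra not_rxy => ruy.
  by apply: (rclass_related _ _ _ uE); rewrite mem_filter ?rux ?ruy.
rewrite size_filter -(count_predC (r u)) -{1}[count _ E]addn0 ltn_add2l.
by rewrite -has_count; apply/hasP; exists z.
Qed.

End EquivalenceClasses.

Lemma partition_at_gap {R : realType} {D : nat} {E : seq 'rV[R]_D} {a tau : R} :
  uniq E -> 0 < a -> 2 * a <= tau -> a < diam E ->
  {in E &, forall u v, edist u v < tau -> edist u v < a} ->
  exists P : seq (seq 'rV[R]_D),
  [/\ is_partition P E, {in P, forall B, size B < size E}%N,
      {in P, forall B, diam B <= a} &
      forall i j, (i < size P)%N -> (j < size P)%N -> i != j ->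
        dist_ge (nth [::] P i) (nth [::] P j) tau].
Proof.
move=> uniq_E a_gt0 le_2a_tau lt_a_diam gap.
pose r : rel 'rV[R]_D := fun u v => edist u v < a.
have r_refl : {in E, reflexive r} by move=> u _; rewrite /r edistxx.
have r_sym : {in E &, symmetric r} by move=> u v _ _; rewrite /r edistC.
have r_trans : {in E & &, transitive r}.
  move=> v u w _ uE wE; rewrite /r => ruv rvw; apply: gap => //.
  exact: lt_le_trans (edist_lt_double ruv rvw) le_2a_tau.
have [/allP r_total|/allPn[x xE /allPn[y yE not_rxy]]] :=
  boolP (all (fun u => all (r u) E) E).
  suff : diam E <= a by rewrite leNgt lt_a_diam.
  apply: diam_le => [|u v uE vE]; first exact: ltW.
  exact/ltW/(allP (r_total u uE)).
exists (rclasses r E); split.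
- exact: rclasses_partition.
- by move=> B; apply: (size_rclasses_lt _ _ r_sym r_trans xE yE).
- move=> B BP; apply: diam_le => [|v w vB wB]; first exact: ltW.
  by apply: ltW; case/rclassesP: BP vB wB => u uE ->; apply: rclass_related.
move=> i j ltiP ltjP neq_ij v w vi wj; rewrite leNgt; apply/negP => lt_vw.
have vE : v \in E by case/rclassesP: (mem_nth [::] ltiP) vi => u _ -> /rclass_sub.
have wE : w \in E by case/rclassesP: (mem_nth [::] ltjP) wj => u _ -> /rclass_sub.
have := rclasses_eq _ _ r_sym r_trans (mem_nth [::] ltiP) (mem_nth [::] ltjP) vi wj.
move/(_ (gap _ _ vE wE lt_vw))/eqP; rewrite nth_uniq ?undup_uniq //.
by rewrite (negbTE neq_ij).
Qed.

Lemma expRN_le_half (R : realType) (x : R) : 1 <= x -> 2 * expR (- x) <= 1.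
Proof.
move=> x_ge1; rewrite expRN ler_pdivrMr ?expR_gt0 // mul1r.
by apply: le_trans (expR_ge1Dx x); lra.
Qed.

Definition scale {R : realType} (eps d : R) (j : nat) : R :=
  expR (- (5 / eps)) ^+ j * (expR (- (1 / eps)) * d).

Section Scales.
Context {R : realType} {eps d : R}.
Hypotheses (eps_gt0 : 0 < eps) (eps_le1 : eps <= 1) (d_gt0 : 0 < d).

Let q_le_half : 2 * expR (- (5 / eps)) <= 1.
Proof. by apply: expRN_le_half; rewrite ler_pdivlMr // mul1r (le_trans eps_le1) // ler1n. Qed.

Let q_le1 : expR (- (5 / eps)) <= 1.
Proof. by rewrite expR_le1 oppr_le0 divr_ge0 ?(ltW eps_gt0). Qed.

Lemma scaleS j : scale eps d j.+1 = expR (- (5 / eps)) * scale eps d j.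
Proof. by rewrite /scale exprS -mulrA. Qed.

Lemma scale_gt0 j : 0 < scale eps d j.
Proof. by rewrite /scale !mulr_gt0 ?exprn_gt0 ?expR_gt0. Qed.

Lemma scale_le j : scale eps d j <= expR (- (1 / eps)) * d.
Proof.
apply: ler_piMl; first by rewrite mulr_ge0 ?expR_ge0 ?(ltW d_gt0).
by rewrite exprn_ile1 ?expR_ge0.
Qed.

Lemma scale_ge n j : (j <= n)%N ->
  expR (- ((1 + 5 * n%:R) / eps)) * d <= scale eps d j.
Proof.
move=> le_jn.
have -> : - ((1 + 5 * n%:R) / eps) = - (5 / eps) * n%:R + - (1 / eps) by ring.
rewrite expRD expRM_natr /scale mulrA.
apply: ler_wpM2r; first exact: ltW.
apply: ler_wpM2r; first exact: expR_ge0.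
by rewrite -(subnKC le_jn) exprD ler_piMr ?exprn_ge0 ?exprn_ile1 ?expR_ge0.
Qed.

Lemma two_scaleS_le j : 2 * scale eps d j.+1 <= scale eps d j.
Proof. by rewrite scaleS mulrA ler_piMl // ltW // scale_gt0. Qed.

Lemma scaleS_le j : scale eps d j.+1 <= scale eps d j.
Proof. by have := two_scaleS_le j; have := scale_gt0 j.+1; lra. Qed.

Lemma scaleS_lt j : scale eps d j.+1 < d.
Proof.
have := scale_le j; have := two_scaleS_le j; have := scale_gt0 j.+1.
have : expR (- (1 / eps)) * d <= d.
  by rewrite ler_piMl ?(ltW d_gt0) // expR_le1 oppr_le0 divr_ge0 ?(ltW eps_gt0).
lra.
Qed.

End Scales.

Theorem lemma2p2 (R : realType) (D k : nat) :
  (2 <= D)%N -> (2 <= k)%N ->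
  exists c Ck : R, 0 < c /\ 0 < Ck /\
  forall (eps : R) (E : seq 'rV[R]_D),
    0 < eps -> eps < c ->
    uniq E -> (2 <= size E <= k)%N ->
    exists (tau : R) (P : seq (seq 'rV[R]_D)),
      expR (- (Ck / eps)) * diam E <= tau /\
      tau <= expR (- (1 / eps)) * diam E /\
      is_partition P E /\
      (forall B, B \in P -> (size B <= k.-1)%N) /\
      (forall B, B \in P -> diam B <= expR (- (5 / eps)) * tau) /\
      (forall i j, (i < size P)%N -> (j < size P)%N -> i != j ->
         dist_ge (nth [::] P i) (nth [::] P j) tau).
Proof.
move=> _ k_ge2; exists 1, (1 + 5 * (k * k)%:R); split=> //.
split=> [|eps E eps_gt0 eps_lt1 uniq_E /andP[size_ge2 size_le_k]].
  by have := ler0n R (k * k); lra.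
have eps_le1 := ltW eps_lt1.
have diamE_gt0 := diam_gt0 uniq_E size_ge2.
have [j le_j_size empty_j] := exists_empty_scale
  [seq edist u v | u <- E, v <- E] (scaleS_le eps_gt0 eps_le1 diamE_gt0).
have le_j_kk : (j <= k * k)%N.
  by rewrite size_allpairs in le_j_size; apply: leq_trans le_j_size (leq_mul _ _).
have gap : {in E &, forall u v, edist u v < scale eps (diam E) j ->
                                edist u v < scale eps (diam E) j.+1}.
  move=> u v uE vE lt_uv; rewrite ltNge; apply: contra empty_j => le_uv.
  by apply/hasP; exists (edist u v); rewrite ?allpairs_f ?le_uv.
have [P [partition_P size_P diam_P sep_P]] := partition_at_gap uniq_E
  (scale_gt0 diamE_gt0 _) (two_scaleS_le eps_gt0 eps_le1 diamE_gt0 _)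
  (scaleS_lt eps_gt0 eps_le1 diamE_gt0 _) gap.
exists (scale eps (diam E) j), P; split; first exact: scale_ge.
split; first exact: scale_le.
split=> //; split; first by move=> B /size_P; lia.
by split=> // B; rewrite -scaleS; exact: diam_P.
Qed.
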